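(* Let $G$ be a finite simple graph and let $v_1,\dots,v_r$, $r\ge 2$, be an $\alpha$-sequence in $G$ such that $N(v_1,\dots,v_{r-1})$ is a $\delta$-set in $G$. Then (a) $\varphi(G)\le r\le \omega(G)$; and (b) $r\ge W(G)$.
   Context: Graphs are finite, undirected, without loops or multiple edges; $n=|V(G)|$, $N(v)$ is the set of vertices adjacent to $v$, $d(v)=|N(v)|$, and for $V\subseteq V(G)$, $N(V)=\bigcap_{v\in V}N(v)$; $N(v_1,\dots,v_k)$ means $N(\{v_1,\dots,v_k\})$. $\omega(G)$ is the clique number of $G$ (largest $p$ such that $G$ has $p$ pairwise adjacent vertices). For $V\subseteq V(G)$ define $W(V)=\sum_{v\in V}\frac{1}{n-d(v)}$ and $W(G)=W(V(G))$. A set $V\subseteq V(G)$ is a $\delta$-set in $G$ if $d(v)\le n-|V|$ for all $v\in V$. $G$ is a generalized $r$-partite graph if $V(G)=V_1\cup\dots\cup V_r$ with $V_i\cap V_j=\emptyset$ for $i\ne j$ and each $V_i$ a $\delta$-set in $G$; $\varphi(G)$ is the smallest such $r$. A sequence $v_1,\dots,v_r$ of vertices is an $\alpha$-sequence in $G$ if (i) $d(v_1)=\max\{d(v)\mid v\in V(G)\}$, and (ii) for $2\le i\le r$, $v_i\in N(v_1,\dots,v_{i-1})$ and $v_i$ has maximal degree in the induced subgraph $G[N(v_1,\dots,v_{i-1})]$. *)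

(* A finite simple graph is a finType T with a symmetric,
   irreflexive adjacency relation e : rel T. *)
From mathcomp Require Import all_boot all_order all_algebra.
Set Implicit Arguments. Unset Strict Implicit. Unset Printing Implicit Defensive.
Import Order.TTheory GRing.Theory Num.Theory.

Section Graph.
Variables (T : finType) (e : rel T).

Definition nbhd (v : T) : {set T} := [set u | e v u].
Definition deg (v : T) : nat := #|nbhd v|.
Definition Nset (A : {set T}) : {set T} := [set u | [forall x in A, e x u]].
Definition deg_in (A : {set T}) (w : T) : nat := #|[set u in A | e w u]|.

Definition Wset (A : {set T}) : rat := (\sum_(v in A) ((#|T| - deg v)%N%:R)^-1)%R.
Definition W : rat := Wset [set: T].

Definition delta_set (A : {set T}) : bool := [forall v in A, deg v <= #|T| - #|A|].

Definition gen_partite (r : nat) : bool :=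
  [exists f : {ffun T -> 'I_r}, [forall i : 'I_r, delta_set [set x | f x == i]]].

Definition clique (S : {set T}) : bool :=
  [forall x in S, forall y in S, (x != y) ==> e x y].
Definition omega : nat := \max_(S : {set T} | clique S) #|S|.

(* alpha-sequence v_1, ..., v_r, represented as v : 'I_r -> T
   (index j : 'I_r stands for v_{j+1}) *)
Definition alpha_seq (r : nat) (v : 'I_r -> T) : Prop :=
  (forall i : 'I_r, val i = 0%N -> forall u : T, deg u <= deg (v i)) /\
  (forall i : 'I_r, (0 < val i)%N ->
     let A := Nset [set v j | j in 'I_r & (val j < val i)%N] in
     v i \in A /\ (forall w, w \in A -> deg_in A w <= deg_in A (v i))).

Lemma gen_partite_card (Hirr : irreflexive e) : exists r, gen_partite r.
Proof.
exists #|T|; apply/existsP; exists [ffun x => enum_rank x]; apply/forallP => i.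
apply/forallP => v; apply/implyP; rewrite !inE ffunE => /eqP Hv.
have -> : [set x | [ffun x => enum_rank x] x == i] = [set v].
  apply/setP => x; rewrite !inE ffunE -Hv; apply/eqP/eqP => [/enum_rank_inj|->] //.
rewrite cards1 /deg /nbhd.
have : [set u | e v u] \subset [set: T] :\ v.
  by apply/subsetP => u; rewrite !inE andbT => Hu; apply/eqP => Huv; rewrite Huv Hirr in Hu.
move/subset_leq_card; rewrite cardsDS ?sub1set ?inE // cardsT cards1.
by [].
Qed.

Definition phi (Hirr : irreflexive e) : nat := ex_minn ((gen_partite_card Hirr)).
End Graph.

(* Let A_i = N(v_1, ..., v_i), so A_0 = V(G) and A_{i+1} = A_i ∩ N(v_{i+1}).
   Colour x by the largest i < r with x in A_i.  For i < r - 1 the class of i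
   lies in the layer A_i \ A_{i+1}, which is a delta-set: a vertex u of A_i has
   at most n - |A_i| neighbours outside A_i and, v_{i+1} being of maximal degree
   in G[A_i], at most |A_{i+1}| inside.  The last class lies in A_{r-1}, a delta-set by
   hypothesis.  Hence phi(G) <= r, and since a delta-set C has
   W(C) <= |C| / |C| = 1, also W(G) <= r.  Finally v_1, ..., v_r are pairwise
   adjacent, so r <= omega(G). *)
From mathcomp Require Import all_boot all_order all_algebra.
From mathcomp Require Import zify.

Set Implicit Arguments.
Unset Strict Implicit.
Unset Printing Implicit Defensive.
Import Order.TTheory GRing.Theory Num.Theory.

Section GraphFacts.
Variables (T : finType) (e : rel T).

Lemma deg_inE (B : {set T}) (w : T) : deg_in e B w = #|B :&: nbhd e w|.
Proof. by apply: eq_card => u; rewrite !inE. Qed.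

Lemma deg_in_setT (w : T) : deg_in e [set: T] w = deg e w.
Proof. by rewrite deg_inE setTI. Qed.

Lemma deg_le_deg_in (B : {set T}) (u : T) :
  (deg e u <= deg_in e B u + (#|T| - #|B|))%N.
Proof.
rewrite /deg -(cardsID B (nbhd e u)) deg_inE setIC leq_add2l.
have -> : (#|T| - #|B| = #|~: B|)%N by rewrite -(cardsC B) addKn.
by apply/subset_leq_card/subsetP => w; rewrite !inE => /andP[].
Qed.

Lemma Nset_subset (A B : {set T}) : A \subset B -> Nset e B \subset Nset e A.
Proof.
move=> /subsetP AB; apply/subsetP => u; rewrite !inE => /forall_inP NBu.
by apply/forall_inP => x /AB; apply: NBu.
Qed.

Lemma delta_setS (A B : {set T}) :
  A \subset B -> delta_set e B -> delta_set e A.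
Proof.
move=> AB /forall_inP dB; apply/forall_inP => u uA.
by rewrite (leq_trans (dB u (subsetP AB u uA))) // leq_sub2l // subset_leq_card.
Qed.

Lemma delta_set_Wset_le1 (C : {set T}) : delta_set e C -> (Wset e C <= 1)%R.
Proof.
move=> /forall_inP dC; have [->|[x xC]] := set_0Vmem C.
  by rewrite /Wset big_set0 ler01.
have C_gt0 : (0 < #|C|)%N by apply/card_gt0P; exists x.
apply: (@le_trans _ _ (\sum_(u in C) (#|C|%:R : rat)^-1)%R).
  apply: ler_sum => u uC; have := dC u uC; have := max_card C => CT du.
  by rewrite lef_pV2 ?posrE ?ltr0n ?ler_nat; lia.
by rewrite sumr_const -[X in (X <= _)%R]mulr_natr mulVf // pnatr_eq0 -lt0n.
Qed.

Lemma gen_partite_W (r : nat) : gen_partite e r -> (W e <= r%:R)%R.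
Proof.
move=> /existsP[f /forallP df].
rewrite /W /Wset (partition_big f xpredT) //= -[r in (_ <= r%:R)%R]card_ord.
rewrite -sumr_const; apply: ler_sum => j _.
rewrite (eq_bigl (mem [set x | f x == j])) => [|x]; last by rewrite !inE.
exact: delta_set_Wset_le1.
Qed.

Lemma phi_le (Hirr : irreflexive e) (r : nat) : gen_partite e r -> (phi Hirr <= r)%N.
Proof. by rewrite /phi; case: ex_minnP => m _; apply. Qed.

Lemma clique_card_le_omega (S : {set T}) : clique e S -> (#|S| <= omega e)%N.
Proof. exact: (@leq_bigmax_cond _ (clique e) (fun S => #|S|)). Qed.

End GraphFacts.

Section AlphaSequence.
Variables (T : finType) (e : rel T) (r : nat) (v : 'I_r -> T).
Hypothesis Halpha : alpha_seq e v.

Definition Nprefix (i : nat) : {set T} :=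
  Nset e [set v j | j in 'I_r & (val j < i)%N].

Lemma Nprefix0 : Nprefix 0 = [set: T].
Proof.
apply/setP => u; rewrite !inE; apply/forall_inP => x.
by case/imsetP => j; rewrite inE.
Qed.

Lemma Nprefix_subset (i j : nat) : (i <= j)%N -> Nprefix j \subset Nprefix i.
Proof.
move=> ij; apply: Nset_subset; apply/subsetP => x /imsetP[k].
by rewrite inE => ki ->; rewrite imset_f // inE (leq_trans ki).
Qed.

Lemma Nprefix_succ (i : 'I_r) : Nprefix i.+1 = Nprefix i :&: nbhd e (v i).
Proof.
apply/setP => u; rewrite !inE.
apply/forall_inP/andP => [Nu | [/forall_inP Nu viu] x /imsetP[j]].
  split; last by apply/Nu/imset_f; rewrite inE /=.
  apply/forall_inP => x /imsetP[j]; rewrite inE => /andP[_ ji] ->.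
  by apply/Nu/imset_f; rewrite inE /= ltnS ltnW.
rewrite inE /= ltnS leq_eqVlt => /orP[/eqP/val_inj -> -> //| ji ->].
by apply/Nu/imset_f; rewrite inE.
Qed.

Lemma alpha_mem (i : 'I_r) : v i \in Nprefix i.
Proof.
have [i0|i_gt0] := posnP i; first by rewrite i0 Nprefix0 inE.
by case: (Halpha.2 i i_gt0).
Qed.

Lemma alpha_deg_max (i : 'I_r) (w : T) :
  w \in Nprefix i -> (deg_in e (Nprefix i) w <= deg_in e (Nprefix i) (v i))%N.
Proof.
have [i0|i_gt0] := posnP i; last by case: (Halpha.2 i i_gt0) => _; apply.
by rewrite i0 Nprefix0 !deg_in_setT => _; apply: Halpha.1.
Qed.

Lemma alpha_adj (i j : 'I_r) : (i < j)%N -> e (v i) (v j).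
Proof.
move=> ij; have := alpha_mem j; rewrite inE => /forall_inP; apply.
by rewrite imset_f ?inE.
Qed.

Lemma alpha_layer_delta_set (i : 'I_r) :
  delta_set e (Nprefix i :\: Nprefix i.+1).
Proof.
apply/forall_inP => u; rewrite inE => /andP[_ uA].
have next_sub := Nprefix_subset (leqnSn i).
have outside := deg_le_deg_in e (Nprefix i) u.
have inside : (deg_in e (Nprefix i) u <= #|Nprefix i.+1|)%N.
  by rewrite (Nprefix_succ i) -deg_inE alpha_deg_max.
have layer_card := cardsD (Nprefix i) (Nprefix i.+1).
rewrite (setIidPr next_sub) in layer_card.
have := subset_leq_card next_sub; have := max_card (Nprefix i); lia.
Qed.

Lemma alpha_gen_partite :
  (0 < r)%N -> delta_set e (Nprefix r.-1) -> gen_partite e r.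
Proof.
move=> r_gt0 last_delta.
pose f x := [arg max_(i > Ordinal r_gt0 | x \in Nprefix i) val i].
have f_spec x : x \in Nprefix (f x) /\
               (forall j : 'I_r, x \in Nprefix j -> (j <= f x)%N).
  by rewrite /f; case: arg_maxnP => [|i]; [rewrite /= Nprefix0 inE | split].
have f_mem x := (f_spec x).1; have f_max x := (f_spec x).2.
apply/existsP; exists [ffun x => f x]; apply/forallP => i.
have [i_next|i_last] := ltnP i.+1 r.
  apply: delta_setS (alpha_layer_delta_set i).
  apply/subsetP => x; rewrite in_set ffunE => /eqP fx_i.
  rewrite in_setD -fx_i f_mem andbT fx_i; apply/negP => x_next.
  by have := f_max x (Ordinal i_next) x_next; rewrite /= fx_i ltnn.
have i_eq : i = r.-1 :> nat by move: (ltn_ord i) i_last; lia.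
apply: delta_setS last_delta; apply/subsetP => x.
by rewrite in_set ffunE -i_eq => /eqP <-.
Qed.

Hypotheses (Hsym : symmetric e) (Hirr : irreflexive e).

Lemma alpha_neq (i j : 'I_r) : i != j -> e (v i) (v j).
Proof.
rewrite neq_ltn => /orP[] ij; first exact: alpha_adj.
by rewrite Hsym; apply: alpha_adj.
Qed.

Lemma alpha_inj : injective v.
Proof.
move=> i j vij; apply/eqP/negPn/negP => /alpha_neq.
by rewrite vij Hirr.
Qed.

Lemma alpha_clique : clique e [set v j | j in 'I_r].
Proof.
apply/forall_inP => _ /imsetP[i _ ->]; apply/forall_inP => _ /imsetP[j _ ->].
by apply/implyP => vij; apply: alpha_neq; apply: contraNneq vij => ->.
Qed.

End AlphaSequence.

Theorem theorem1 (T : finType) (e : rel T)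
    (Hsym : symmetric e) (Hirr : irreflexive e)
    (r : nat) (v : 'I_r -> T)
    (Hr : (2 <= r)%N)
    (Halpha : alpha_seq e v)
    (Hdelta : delta_set e (Nset e [set v j | j in 'I_r & (val j < r.-1)%N])) :
  ((phi Hirr <= r)%N /\ (r <= omega e)%N) /\ (W e <= r%:R :> rat)%R.
Proof.
have partite : gen_partite e r.
  by apply: (alpha_gen_partite Halpha) => //; apply: leq_trans Hr.
split; last exact: gen_partite_W.
split; first exact: phi_le.
have := clique_card_le_omega (alpha_clique Halpha Hsym).
rewrite card_imset ?card_ord //.
exact: alpha_inj Halpha Hsym Hirr.
Qed.
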